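(* Let $z,r,z',r'$ be real numbers with $z^2+r^2\le1$ and $z'^2+r'^2\le 1$, and set $$\rho=\frac12\begin{pmatrix}1+z & r\\ r & 1-z\end{pmatrix},\qquad \rho'=\frac12\begin{pmatrix}1+z' & r'\\ r' & 1-z'\end{pmatrix}.$$ Then there exists an incoherent operation (IO) $\Lambda$ with $\Lambda(\rho)=\rho'$ if and only if $$(1-z^2)\,r'^2\le (1-z'^2)\,r^2\qquad\text{and}\qquad |r'|\le |r|$$ (for $r\neq0$ the first condition reads $z'^2+(1-z^2)\,r'^2/r^2\le 1$). The same characterization holds with IO replaced by strictly incoherent operation (SIO).
   Context: Fix the computational (incoherent) basis $\{|0\rangle,|1\rangle\}$ of $\mathbb{C}^2$; a state is incoherent if it is diagonal in this basis. An incoherent operation (IO) is a quantum channel with Kraus operators $\{K_n\}$, $\sum_n K_n^\dagger K_n=I$, such that $K_n\delta K_n^\dagger$ is diagonal for every diagonal $\delta$ (equivalently, each $K_n$ has at most one nonzero entry in every column). A strictly incoherent operation (SIO) is an IO whose Kraus operators additionally satisfy that $K_n^\dagger\delta K_n$ is diagonal for every diagonal $\delta$ (equivalently, each $K_n$ has at most one nonzero entry in every row and every column). *)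

(* Scalars: an arbitrary numClosedFieldType C (e.g. complex
   numbers); "real number" = element of C that is Num.real. *)
From HB Require Import structures.
From mathcomp Require Import all_boot all_order all_algebra.
Set Implicit Arguments. Unset Strict Implicit. Unset Printing Implicit Defensive.
Import Order.TTheory GRing.Theory Num.Theory.
Local Open Scope ring_scope.

Section QubitDefs.
Variable C : numClosedFieldType.

Definition adjmx (A : 'M[C]_2) : 'M[C]_2 := \matrix_(i, j) (A j i)^*.

Definition diagonal (A : 'M[C]_2) : Prop := forall i j : 'I_2, i != j -> A i j = 0.

Definition kraus_complete (n : nat) (K : 'I_n -> 'M[C]_2) : Prop :=
  \sum_(k < n) adjmx (K k) *m K k = 1%:M.

Definition apply_kraus (n : nat) (K : 'I_n -> 'M[C]_2) (rho : 'M[C]_2) : 'M[C]_2 :=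
  \sum_(k < n) K k *m rho *m adjmx (K k).

Definition IO_kraus (n : nat) (K : 'I_n -> 'M[C]_2) : Prop :=
  kraus_complete K /\
  forall k, forall d : 'M[C]_2, diagonal d -> diagonal (K k *m d *m adjmx (K k)).

Definition SIO_kraus (n : nat) (K : 'I_n -> 'M[C]_2) : Prop :=
  IO_kraus K /\
  forall k, forall d : 'M[C]_2, diagonal d -> diagonal (adjmx (K k) *m d *m K k).

Definition qubit_state (z r : C) : 'M[C]_2 :=
  2^-1 *: \matrix_(i < 2, j < 2)
     (if i == j then (if i == 0 :> nat then 1 + z else 1 - z) else r).

End QubitDefs.

From HB Require Import structures.
From mathcomp Require Import all_boot all_order all_algebra.
From mathcomp Require Import ring lra.
Set Implicit Arguments. Unset Strict Implicit. Unset Printing Implicit Defensive.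
Import Order.TTheory GRing.Theory Num.Theory.
Local Open Scope ring_scope.

(* Write the input state as populations P, Q = (1 +- z)/2 and coherence c = r/2.
   An incoherent Kraus operator has at most one nonzero entry per column, so it
   multiplies c by K00 K11^* + K01 K10^* and produces populations whose product is
   at least P Q |K00 K11|^2 (or P Q |K01 K10|^2).  Summing over the Kraus family and
   applying Cauchy-Schwarz once against trace preservation and once against the
   output populations shows that the total factor s satisfies s <= 1 and
   P Q s^2 <= P' Q', which are the two stated conditions.  Conversely, given such an
   s, two diagonal and two anti-diagonal real Kraus operators, paired with opposite
   signs, realise the transformation; they are strictly incoherent. *)

Section NonnegInequalities.
Variable R : numDomainType.
Implicit Types p a b m : R.

Lemma ler_AGM2_sqr p a b : 0 <= p -> 0 <= a -> 0 <= b -> p ^+ 2 <= a * b ->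
  2 * p <= a + b.
Proof.
move=> p0 a0 b0 hp; rewrite -(@ler_pXn2r _ 2) ?nnegrE ?addr_ge0 ?mulr_ge0 //.
apply: le_trans (real_leif_AGM2_scaled (ger0_real a0) (ger0_real b0)).1.
by rewrite exprMn -natrX mulr_natl ler_wMn2r.
Qed.

Lemma cauchy_schwarz_sum n m (u x y : 'I_n -> R) : 0 <= m ->
  (forall k, [/\ 0 <= u k, 0 <= x k, 0 <= y k & m * u k ^+ 2 <= x k * y k]) ->
  m * (\sum_k u k) ^+ 2 <= (\sum_k x k) * (\sum_k y k).
Proof.
elim: n u x y => [|n IH] u x y m0 h; first by rewrite !big_ord0 mul0r expr0n mulr0.
rewrite !big_ord_recr /=.
set U := \sum_(i < n) _; set X := \sum_(i < n) _; set Y := \sum_(i < n) _.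
have [a0 b0 c0 habc] := h ord_max.
move: (u ord_max) (x ord_max) (y ord_max) a0 b0 c0 habc => a b c a0 b0 c0 habc.
have [U0 X0 Y0] : [/\ 0 <= U, 0 <= X & 0 <= Y].
  by split; apply: sumr_ge0 => i _; case: (h (widen_ord (leqnSn n) i)).
have hU : m * U ^+ 2 <= X * Y by apply: IH => // k; apply: h.
have cross : 2 * (m * U * a) <= X * c + b * Y.
  apply: ler_AGM2_sqr; rewrite ?mulr_ge0 //.
  have -> : (m * U * a) ^+ 2 = (m * U ^+ 2) * (m * a ^+ 2) by ring.
  have -> : X * c * (b * Y) = (X * Y) * (b * c) by ring.
  by apply: ler_pM; rewrite ?mulr_ge0 ?exprn_ge0.
have -> : m * (U + a) ^+ 2 = m * U ^+ 2 + m * a ^+ 2 + 2 * (m * U * a) by ring.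
have -> : (X + b) * (Y + c) = X * Y + b * c + (X * c + b * Y) by ring.
by rewrite !lerD.
Qed.
End NonnegInequalities.

Section QubitArithmetic.
Variable R : realFieldType.
Implicit Types z r s : R.

Lemma qubit_state_bounds z r : z ^+ 2 + r ^+ 2 <= 1 ->
  [/\ 0 <= 2^-1 * (1 + z), 0 <= 2^-1 * (1 - z)
    & (2^-1 * r) ^+ 2 <= 2^-1 * (1 + z) * (2^-1 * (1 - z))].
Proof. by move=> h; split; nra. Qed.

Lemma coherence_conditions_of_contraction z r (z' r' : R) s :
  z ^+ 2 + r ^+ 2 <= 1 -> 0 <= s -> s ^+ 2 <= 1 ->
  2^-1 * (1 + z) * (2^-1 * (1 - z)) * s ^+ 2 <= 2^-1 * (1 + z') * (2^-1 * (1 - z')) ->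
  `|2^-1 * r'| <= `|2^-1 * r| * s ->
  (1 - z ^+ 2) * r' ^+ 2 <= (1 - z' ^+ 2) * r ^+ 2 /\ `|r'| <= `|r|.
Proof.
move=> hz s0 s1 hpop.
rewrite !normrM ger0_norm ?invr_ge0 ?ler0n // -mulrA ler_pM2l ?invr_gt0 ?ltr0n // => hr.
have s1' : s <= 1 by nra.
have [nr0 nr'0] := (normr_ge0 r, normr_ge0 r').
have hr2 : `|r'| ^+ 2 <= `|r| ^+ 2 * s ^+ 2.
  by rewrite -exprMn ler_pXn2r // ?nnegrE ?mulr_ge0.
rewrite -(real_normK (num_real r)) -(real_normK (num_real r')).
split; nra.
Qed.

Lemma contraction_of_coherence_conditions z r (z' r' : R) :
  z ^+ 2 + r ^+ 2 <= 1 -> z' ^+ 2 + r' ^+ 2 <= 1 ->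
  (1 - z ^+ 2) * r' ^+ 2 <= (1 - z' ^+ 2) * r ^+ 2 -> `|r'| <= `|r| ->
  exists s, [/\ s ^+ 2 <= 1,
    2^-1 * (1 + z) * (2^-1 * (1 - z)) * s ^+ 2 <= 2^-1 * (1 + z') * (2^-1 * (1 - z'))
    & 2^-1 * r * s = 2^-1 * r'].
Proof.
move=> hz hz' hcoh hr.
have [r0|r_neq0] := eqVneq r 0.
  move: hr; rewrite r0 normr0 normr_le0 => /eqP ->.
  by exists 0; split; [nra | nra | ring].
have r2_gt0 : 0 < r ^+ 2 by rewrite exprn_even_gt0.
exists (r' / r); split.
- rewrite expr_div_n ler_pdivrMr // mul1r.
  by rewrite -(real_normK (num_real r)) -(real_normK (num_real r')) ler_pXn2r // nnegrE.
- rewrite expr_div_n.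
  have -> : 2^-1 * (1 + z) * (2^-1 * (1 - z)) * (r' ^+ 2 / r ^+ 2) =
            (1 - z ^+ 2) * r' ^+ 2 / (4 * r ^+ 2) by field.
  have -> : 2^-1 * (1 + z') * (2^-1 * (1 - z')) =
            (1 - z' ^+ 2) * r ^+ 2 / (4 * r ^+ 2) by field.
  by rewrite ler_pM2r // invr_gt0 mulr_gt0.
- by field.
Qed.
End QubitArithmetic.

Lemma divr_ge0_of_mul (R : realFieldType) (a d : R) : 0 <= a * d -> 0 <= a / d.
Proof.
have [->|d_neq0] := eqVneq d 0; first by rewrite invr0 mulr0.
have -> : a / d = a * d / d ^+ 2 by field.
by move=> ad0; apply: divr_ge0 => //; apply: sqr_ge0.
Qed.

Lemma convex_combination_between (R : realFieldType) (P Q q : R) :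
  (q - P) * (q - Q) <= 0 -> exists2 l, 0 <= l /\ 0 <= 1 - l & l * P + (1 - l) * Q = q.
Proof.
move=> hq; have [PQ|PQ_neq] := eqVneq P Q.
  have qP : q = P by apply/eqP; rewrite -subr_eq0 -sqrf_eq0 eq_le sqr_ge0 andbT; nra.
  by exists 1; [rewrite subrr | rewrite qP; ring].
have PQ_neq0 : P - Q != 0 by rewrite subr_eq0.
exists ((q - Q) / (P - Q)); last by field.
split; last have -> : 1 - (q - Q) / (P - Q) = (P - q) / (P - Q) by field.
all: by apply: divr_ge0_of_mul; have := sqr_ge0 (q - P); have := sqr_ge0 (q - Q); nra.
Qed.

Section EuclideanField.
Variables (R : realFieldType) (sqrt : R -> R).
Hypothesis sqrt_spec : forall a, 0 <= a -> 0 <= sqrt a /\ sqrt a ^+ 2 = a.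

Lemma sqrt_ge0 a : 0 <= a -> 0 <= sqrt a. Proof. by case/sqrt_spec. Qed.
Lemma sqrtK a : 0 <= a -> sqrt a ^+ 2 = a. Proof. by case/sqrt_spec. Qed.

Lemma sqrt_mul a b : 0 <= a -> 0 <= b -> sqrt a * sqrt b = sqrt (a * b).
Proof.
move=> a0 b0; have ab0 := mulr_ge0 a0 b0.
apply: (@pexpIrn _ 2); rewrite ?nnegrE ?mulr_ge0 ?sqrt_ge0 //=.
by rewrite exprMn !sqrtK.
Qed.

Lemma sign_weights s G : `|s| <= G ->
  exists w w' : R, w ^+ 2 + w' ^+ 2 = 1 /\ (w ^+ 2 - w' ^+ 2) * G = s.
Proof.
move=> hs; have G0 : 0 <= G := le_trans (normr_ge0 s) hs.
pose t := s / G.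
have t1 : `|t| <= 1.
  rewrite /t; have [->|G_neq0] := eqVneq G 0; first by rewrite invr0 mulr0 normr0 ler01.
  by rewrite normrM normfV (ger0_norm G0) ler_pdivrMr ?mul1r // lt_def G_neq0.
have [tp tm] : 0 <= (1 + t) / 2 /\ 0 <= (1 - t) / 2.
  by move: t1; rewrite ler_norml => /andP[? ?]; split; apply: divr_ge0; lra.
exists (sqrt ((1 + t) / 2)), (sqrt ((1 - t) / 2)); rewrite !sqrtK //; split; first by field.
have [G_eq0|G_neq0] := eqVneq G 0; last by rewrite /t; field.
by move: hs; rewrite G_eq0 mulr0 normr_le0 => /eqP ->.
Qed.

Lemma unit_vectors_between P Q q :
  (q - P) * (q - Q) <= 0 ->
  exists x y xb yb : R, [/\ x ^+ 2 + xb ^+ 2 = 1, y ^+ 2 + yb ^+ 2 = 1,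
    P * x ^+ 2 + Q * yb ^+ 2 = q & x * y + xb * yb = 1].
Proof.
case/convex_combination_between => l [l0 l1] hl.
exists (sqrt l), (sqrt l), (sqrt (1 - l)), (sqrt (1 - l)).
by rewrite -!expr2 !sqrtK // -hl; split; ring.
Qed.

Lemma unit_vectors_outside P Q q q' :
  0 <= P -> 0 <= Q -> P + Q = 1 -> 0 <= q -> 0 <= q' -> q + q' = 1 ->
  0 < (q - P) * (q - Q) ->
  exists x y xb yb : R, [/\ x ^+ 2 + xb ^+ 2 = 1, y ^+ 2 + yb ^+ 2 = 1,
    P * x ^+ 2 + Q * yb ^+ 2 = q & x * y + xb * yb = sqrt (q * q' / (P * Q))].
Proof.
move=> P0 Q0 PQ1 q0 q'0 qq'1 outside.
have [P_gt0 Q_gt0] : 0 < P /\ 0 < Q by split; nra.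
have eQ : Q = 1 - P by rewrite -PQ1; ring.
have eq' : q' = 1 - q by rewrite -qq'1; ring.
subst Q q'.
have den_neq0 : (q - (1 - P)) + (q - P) != 0.
  by apply/eqP => h; have := sqr_ge0 (q - P); nra.
pose L := (q - (1 - P)) / ((q - (1 - P)) + (q - P)).
have L0 : 0 <= L by apply: divr_ge0_of_mul; have := sqr_ge0 (q - (1 - P)); nra.
have L1 : 0 <= 1 - L.
  have -> : 1 - L = (q - P) / ((q - (1 - P)) + (q - P)) by rewrite /L; field.
  by apply: divr_ge0_of_mul; have := sqr_ge0 (q - P); nra.
have [P_neq0 Q_neq0] : P != 0 /\ 1 - P != 0 by rewrite !gt_eqF.
have [[[qP0 q'Q0] q'P0] qQ0] :=
  (divr_ge0 q0 P0, divr_ge0 q'0 Q0, divr_ge0 q'0 P0, divr_ge0 q0 Q0).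
exists (sqrt L * sqrt (q / P)), (sqrt L * sqrt ((1 - q) / (1 - P))),
       (sqrt (1 - L) * sqrt ((1 - q) / P)), (sqrt (1 - L) * sqrt (q / (1 - P))).
rewrite !exprMn !sqrtK //; split; try by rewrite /L; field; rewrite ?P_neq0 ?Q_neq0 ?den_neq0.
have -> : sqrt L * sqrt (q / P) * (sqrt L * sqrt ((1 - q) / (1 - P))) +
          sqrt (1 - L) * sqrt ((1 - q) / P) * (sqrt (1 - L) * sqrt (q / (1 - P))) =
          sqrt L ^+ 2 * (sqrt (q / P) * sqrt ((1 - q) / (1 - P))) +
          sqrt (1 - L) ^+ 2 * (sqrt ((1 - q) / P) * sqrt (q / (1 - P))) by ring.
rewrite !sqrtK // !sqrt_mul //.
have -> : (1 - q) / P * (q / (1 - P)) = q / P * ((1 - q) / (1 - P)) by ring.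
by rewrite -mulrDl (_ : L + (1 - L) = 1) ?mul1r ?mulf_div //; ring.
Qed.

(* [x y + xb yb] is the factor by which a Kraus family with these moduli, mapping
   populations [P, Q] to [q, q'], can scale the coherence. *)
Lemma unit_vectors_with_overlap P Q q q' s :
  0 <= P -> 0 <= Q -> P + Q = 1 -> 0 <= q -> 0 <= q' -> q + q' = 1 ->
  s ^+ 2 <= 1 -> P * Q * s ^+ 2 <= q * q' ->
  exists x y xb yb : R, [/\ x ^+ 2 + xb ^+ 2 = 1, y ^+ 2 + yb ^+ 2 = 1,
    P * x ^+ 2 + Q * yb ^+ 2 = q & `|s| <= x * y + xb * yb].
Proof.
move=> P0 Q0 PQ1 q0 q'0 qq'1 s1 hs.
have abs_le_sqrt a : s ^+ 2 <= a -> `|s| <= sqrt a.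
  move=> sa; have a0 : 0 <= a := le_trans (sqr_ge0 s) sa.
  by rewrite -(@ler_pXn2r _ 2) ?nnegrE ?sqrt_ge0 // real_normK ?num_real // sqrtK.
have [between|outside] := lerP ((q - P) * (q - Q)) 0.
  have [x [y [xb [yb [ex ey eq ov]]]]] := unit_vectors_between between.
  exists x, y, xb, yb; split; rewrite ?ov //.
  by rewrite -(@ler_pXn2r _ 2) ?nnegrE // real_normK ?num_real // expr1n.
have [x [y [xb [yb [ex ey eq ov]]]]] := unit_vectors_outside P0 Q0 PQ1 q0 q'0 qq'1 outside.
exists x, y, xb, yb; split; rewrite ?ov //; apply: abs_le_sqrt.
have [P_gt0 Q_gt0] : 0 < P /\ 0 < Q by split; nra.
by rewrite ler_pdivlMr ?mulr_gt0 // mulrC.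
Qed.
End EuclideanField.

Lemma sio_parameters (R : realFieldType) (sqrt : R -> R)
    (sqrt_spec : forall a, 0 <= a -> 0 <= sqrt a /\ sqrt a ^+ 2 = a) (z r z' r' : R) :
  z ^+ 2 + r ^+ 2 <= 1 -> z' ^+ 2 + r' ^+ 2 <= 1 ->
  (1 - z ^+ 2) * r' ^+ 2 <= (1 - z' ^+ 2) * r ^+ 2 -> `|r'| <= `|r| ->
  exists x y xb yb w w' : R,
    [/\ x ^+ 2 + xb ^+ 2 = 1, y ^+ 2 + yb ^+ 2 = 1, w ^+ 2 + w' ^+ 2 = 1,
        2^-1 * (1 + z) * x ^+ 2 + 2^-1 * (1 - z) * yb ^+ 2 = 2^-1 * (1 + z')
      & 2^-1 * r * ((w ^+ 2 - w' ^+ 2) * (x * y + xb * yb)) = 2^-1 * r'].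
Proof.
move=> hz hz' hcoh hr.
have [s [s1 hs hrs]] := contraction_of_coherence_conditions hz hz' hcoh hr.
have [P0 Q0 _] := qubit_state_bounds hz.
have [q0 q'0 _] := qubit_state_bounds hz'.
have pop1 (t : R) : 2^-1 * (1 + t) + 2^-1 * (1 - t) = 1 by field.
have [x [y [xb [yb [ex ey ez hov]]]]] :=
  unit_vectors_with_overlap sqrt_spec P0 Q0 (pop1 z) q0 q'0 (pop1 z') s1 hs.
have [w [w' [ew ews]]] := sign_weights sqrt_spec hov.
by exists x, y, xb, yb, w, w'; rewrite ews.
Qed.

(* The real elements of [C] form a real field, over which [lra] and [nra] apply;
   statements about it transfer back to [C] by conversion, since its operations
   compute through [val]. *)
Section RealSubfield.
Variable C : numClosedFieldType.

Definition real_subfield := {x : C | x \is Num.real}.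
HB.instance Definition _ := [isSub of real_subfield for (@sval C (fun x => x \is Num.real))].
HB.instance Definition _ := [Choice of real_subfield by <:].
HB.instance Definition _ := [SubChoice_isSubIntegralDomain of real_subfield by <:].
HB.instance Definition _ := [SubIntegralDomain_isSubField of real_subfield by <:].

Implicit Types x y : real_subfield.

Let le_real x y := val x <= val y.
Let lt_real x y := val x < val y.
Let norm_real x : real_subfield := Sub `|val x| (normr_real _).

Fact le_real0_add x y : le_real 0 x -> le_real 0 y -> le_real 0 (x + y).
Proof. exact: addr_ge0. Qed.
Fact le_real0_mul x y : le_real 0 x -> le_real 0 y -> le_real 0 (x * y).
Proof. exact: mulr_ge0. Qed.
Fact le_real0_anti x : le_real 0 x -> le_real x 0 -> x = 0.
Proof. by rewrite /le_real => x0 x0'; apply: val_inj; apply/eqP; rewrite eq_le x0 x0'. Qed.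
Fact sub_real_ge0 x y : le_real 0 (y - x) = le_real x y.
Proof. exact: subr_ge0. Qed.
Fact le_real0_total x : le_real 0 x || le_real x 0.
Proof. exact: valP x. Qed.
Fact norm_realN x : norm_real (- x) = norm_real x.
Proof. by apply: val_inj; rewrite /= normrN. Qed.
Fact ge0_norm_real x : le_real 0 x -> norm_real x = x.
Proof. by rewrite /le_real => x0; apply: val_inj; rewrite /= ger0_norm. Qed.
Fact lt_real_def x y : lt_real x y = (y != x) && le_real x y.
Proof. exact: lt_def. Qed.

HB.instance Definition _ := Num.IntegralDomain_isLeReal.Build real_subfield
  le_real0_add le_real0_mul le_real0_anti sub_real_ge0 le_real0_total
  norm_realN ge0_norm_real lt_real_def.

Lemma real_liftP (c : C) : c \is Num.real -> exists x : real_subfield, c = val x.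
Proof. by move=> c_real; exists (Sub c c_real). Qed.

Definition sqrt_real x : real_subfield := insubd 0 (sqrtC (val x)).

Lemma sqrt_realE x : 0 <= x -> 0 <= sqrt_real x /\ sqrt_real x ^+ 2 = x.
Proof.
move=> x0; have x0' : 0 <= val x := x0.
have val_sqrt : val (sqrt_real x) = sqrtC (val x) by rewrite val_insubd sqrtC_real.
split; first by rewrite -[_ <= _]/(0 <= val _) val_sqrt sqrtC_ge0.
by apply: val_inj; rewrite -[val (_ ^+ 2)]/(val (sqrt_real x) ^+ 2) val_sqrt sqrtCK.
Qed.
End RealSubfield.

Section RealTransfer.
Variable C : numClosedFieldType.
Implicit Types z r s : C.

Lemma qubit_state_boundsC z r : z \is Num.real -> r \is Num.real -> z ^+ 2 + r ^+ 2 <= 1 ->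
  [/\ 0 <= 2^-1 * (1 + z), 0 <= 2^-1 * (1 - z)
    & (2^-1 * r) ^+ 2 <= 2^-1 * (1 + z) * (2^-1 * (1 - z))].
Proof.
move=> /real_liftP[Z ->] /real_liftP[Rr ->] hz.
have [h1 h2 h3] := qubit_state_bounds (hz : Z ^+ 2 + Rr ^+ 2 <= 1).
by split; [exact: h1 | exact: h2 | exact: h3].
Qed.

Lemma coherence_conditions_of_contractionC z r (z' r' : C) s :
  z \is Num.real -> r \is Num.real -> z' \is Num.real -> r' \is Num.real ->
  z ^+ 2 + r ^+ 2 <= 1 -> 0 <= s -> s ^+ 2 <= 1 ->
  2^-1 * (1 + z) * (2^-1 * (1 - z)) * s ^+ 2 <= 2^-1 * (1 + z') * (2^-1 * (1 - z')) ->
  `|2^-1 * r'| <= `|2^-1 * r| * s ->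
  (1 - z ^+ 2) * r' ^+ 2 <= (1 - z' ^+ 2) * r ^+ 2 /\ `|r'| <= `|r|.
Proof.
move=> /real_liftP[Z ->] /real_liftP[Rr ->] /real_liftP[Z' ->] /real_liftP[Rr' ->] hz s0.
have [T eT] := real_liftP (ger0_real s0); rewrite eT in s0 * => T1 hpop hr.
have [h1 h2] := coherence_conditions_of_contraction (hz : Z ^+ 2 + Rr ^+ 2 <= 1)
  (s0 : 0 <= T) (T1 : T ^+ 2 <= 1)
  (hpop : 2^-1 * (1 + Z) * (2^-1 * (1 - Z)) * T ^+ 2 <= 2^-1 * (1 + Z') * (2^-1 * (1 - Z')))
  (hr : `|2^-1 * Rr'| <= `|2^-1 * Rr| * T).
by split; [exact: h1 | exact: h2].
Qed.
End RealTransfer.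

(* [i1] is written as the index produced by [big_ord_recl], not as [ord_max]. *)
Notation i0 := (@ord0 1).
Notation i1 := (@lift 2 ord0 ord0).

Section QubitMatrices.
Variable C : numClosedFieldType.
Implicit Types (K A : 'M[C]_2) (z r : C).

Lemma ord2P (i : 'I_2) : i = i0 \/ i = i1.
Proof. by case: i => [[|[|//]]] i_lt; [left | right]; apply: val_inj. Qed.

Lemma qubit_stateE z r :
  [/\ qubit_state z r i0 i0 = 2^-1 * (1 + z), qubit_state z r i0 i1 = 2^-1 * r,
      qubit_state z r i1 i0 = 2^-1 * r & qubit_state z r i1 i1 = 2^-1 * (1 - z)].
Proof. by rewrite /qubit_state !mxE. Qed.

Lemma adjmxK K : adjmx (adjmx K) = K.
Proof. by apply/matrixP => i j; rewrite !mxE conjCK. Qed.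

Lemma adjmx_mulE K i l : (adjmx K *m K) i l = (K i0 i)^* * K i0 l + (K i1 i)^* * K i1 l.
Proof. by rewrite /adjmx !mxE !big_ord_recl big_ord0 !mxE addr0. Qed.

Lemma mulmx_adjmxE K A i l : (K *m A *m adjmx K) i l =
  K i i0 * A i0 i0 * (K l i0)^* + K i i0 * A i0 i1 * (K l i1)^* +
  K i i1 * A i1 i0 * (K l i0)^* + K i i1 * A i1 i1 * (K l i1)^*.
Proof.
rewrite /adjmx !mxE !big_ord_recl !big_ord0 !mxE !big_ord_recl !big_ord0 !addr0.
by move: (K l i0)^* (K l i1)^* => u v; ring.
Qed.

Lemma conjCM (a b : C) : (a * b)^* = a^* * b^*. Proof. exact: rmorphM. Qed.
Lemma conjCD (a b : C) : (a + b)^* = a^* + b^*. Proof. exact: rmorphD. Qed.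
Lemma conjCN (a : C) : (- a)^* = - a^*. Proof. exact: rmorphN. Qed.

Lemma qubit_form_ge0 (P Q c x y : C) :
  0 <= P -> 0 <= Q -> c \is Num.real -> c ^+ 2 <= P * Q ->
  0 <= x * P * x^* + x * c * y^* + y * c * x^* + y * Q * y^*.
Proof.
move=> P0 Q0 c_real hc; set w := x * y^*.
have -> : x * P * x^* + x * c * y^* + y * c * x^* + y * Q * y^* =
    (P * `|x| ^+ 2 + Q * `|y| ^+ 2) + c * (w + w^*).
  by rewrite /w !normCK conjCM conjCK; move: x^* y^* => xc yc; ring.
have t_real : c * (w + w^*) \is Num.real by rewrite rpredM // CrealE conjCD conjCK addrC.
have t_le : `|c * (w + w^*)| <= 2 * (`|c| * `|x| * `|y|).
  rewrite normrM -mulrA mulrCA ler_wpM2l //.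
  by apply: le_trans (ler_normD _ _) _; rewrite norm_conjC normrM norm_conjC mulr2n mulrDl mul1r.
have amgm : 2 * (`|c| * `|x| * `|y|) <= P * `|x| ^+ 2 + Q * `|y| ^+ 2.
  apply: ler_AGM2_sqr; rewrite ?mulr_ge0 ?exprn_ge0 //.
  have -> : (`|c| * `|x| * `|y|) ^+ 2 = `|c| ^+ 2 * (`|x| ^+ 2 * `|y| ^+ 2) by ring.
  have -> : P * `|x| ^+ 2 * (Q * `|y| ^+ 2) = P * Q * (`|x| ^+ 2 * `|y| ^+ 2) by ring.
  by rewrite real_normK // ler_wpM2r ?mulr_ge0 ?exprn_ge0.
rewrite -[c * _]opprK subr_ge0 (le_trans _ amgm) // (le_trans _ t_le) //.
by rewrite -normrN real_ler_norm ?rpredN.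
Qed.
End QubitMatrices.

Section Necessity.
Variable C : numClosedFieldType.
Implicit Types (K : 'M[C]_2) (z r : C).

Lemma io_column_support K :
  (forall d, diagonal d -> diagonal (K *m d *m adjmx K)) ->
  forall j, K i0 j = 0 \/ K i1 j = 0.
Proof.
move=> io j; have d_jj : diagonal (delta_mx j j : 'M[C]_2).
  move=> a b ab; rewrite mxE; apply/eqP; rewrite pnatr_eq0 eqb0.
  by apply: contraNN ab => /andP[/eqP-> /eqP->].
have := io _ d_jj i0 i1 isT; rewrite mulmx_adjmxE !mxE.
case: (ord2P j) => -> /=; rewrite ?mulr1n ?mulr0n ?mulr1 ?mulr0 ?mul0r ?addr0 ?add0r.
all: by move/eqP; rewrite mulf_eq0 conjC_eq0 => /orP[/eqP|/eqP]; [left | right].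
Qed.

Definition kraus_overlap K := `|K i0 i0| * `|K i1 i1| + `|K i0 i1| * `|K i1 i0|.

Lemma kraus_overlap_ge0 K : 0 <= kraus_overlap K.
Proof. by rewrite addr_ge0 ?mulr_ge0. Qed.

Lemma kraus_overlap_sqr_le K :
  kraus_overlap K ^+ 2 <=
  (`|K i0 i0| ^+ 2 + `|K i1 i0| ^+ 2) * (`|K i0 i1| ^+ 2 + `|K i1 i1| ^+ 2).
Proof.
rewrite -subr_ge0 /kraus_overlap.
set a := `|K i0 i0|; set b := `|K i0 i1|; set d := `|K i1 i1|; set e := `|K i1 i0|.
have -> : (a ^+ 2 + e ^+ 2) * (b ^+ 2 + d ^+ 2) - (a * d + b * e) ^+ 2 = (a * b - d * e) ^+ 2
  by ring.
by rewrite real_exprn_even_ge0 // rpredB // rpredM // normr_real.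
Qed.

Lemma io_kraus_output_bounds K z r :
  z \is Num.real -> r \is Num.real -> z ^+ 2 + r ^+ 2 <= 1 ->
  (forall j, K i0 j = 0 \/ K i1 j = 0) ->
  let A := K *m qubit_state z r *m adjmx K in
  [/\ `|A i0 i1| <= `|2^-1 * r| * kraus_overlap K, 0 <= A i0 i0, 0 <= A i1 i1
    & 2^-1 * (1 + z) * (2^-1 * (1 - z)) * kraus_overlap K ^+ 2 <= A i0 i0 * A i1 i1].
Proof.
move=> z_real r_real hz supp A.
have [P0 Q0 hc] := qubit_state_boundsC z_real r_real hz.
have c_real : 2^-1 * r \is Num.real by rewrite rpredM // rpredV rpred_nat.
have form_ge0 x y := qubit_form_ge0 x y P0 Q0 c_real hc.
have conj_sqr (a t : C) : a * t * a^* = t * `|a| ^+ 2.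
  by rewrite normCK; move: a^* => ac; ring.
have ler_eq (a b : C) : a = b -> a <= b by move->.
have [q00 q01 q10 q11] := qubit_stateE z r.
rewrite /A /kraus_overlap !mulmx_adjmxE q00 q01 q10 q11.
move: P0 Q0 hc c_real form_ge0.
set P := 2^-1 * (1 + z); set Q := 2^-1 * (1 - z); set c := 2^-1 * r.
clearbody P Q c => P0 Q0 hc c_real form_ge0.
case: (supp i0) => ->; case: (supp i1) => ->;
  rewrite ?conjC0 ?normr0 ?mulr0 ?mul0r ?addr0 ?add0r.
- by split; rewrite ?normr0 ?expr0n ?mulr0 ?mul0r //= ?mulr0 //; apply: form_ge0.
- rewrite (conj_sqr (K i0 i1)) (conj_sqr (K i1 i0)) !normrM norm_conjC.
  by split; try (apply: ler_eq; ring); rewrite mulr_ge0 ?exprn_ge0.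
- rewrite (conj_sqr (K i0 i0)) (conj_sqr (K i1 i1)) !normrM norm_conjC.
  by split; try (apply: ler_eq; ring); rewrite mulr_ge0 ?exprn_ge0.
- by split; rewrite ?normr0 ?expr0n ?mulr0 ?mul0r //= ?mulr0 //; apply: form_ge0.
Qed.

Lemma coherence_conditions_of_io n (K : 'I_n -> 'M[C]_2) z r (z' r' : C) :
  z \is Num.real -> r \is Num.real -> z' \is Num.real -> r' \is Num.real ->
  z ^+ 2 + r ^+ 2 <= 1 ->
  IO_kraus K -> apply_kraus K (qubit_state z r) = qubit_state z' r' ->
  (1 - z ^+ 2) * r' ^+ 2 <= (1 - z' ^+ 2) * r ^+ 2 /\ `|r'| <= `|r|.
Proof.
move=> z_real r_real z'_real r'_real hz [complete io] out.
have bounds k := io_kraus_output_bounds z_real r_real hz (io_column_support (io k)).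
have out_entry i j :
    \sum_k (K k *m qubit_state z r *m adjmx (K k)) i j = qubit_state z' r' i j.
  by rewrite -summxE -out.
have complete_entry i : \sum_k (`|K k i0 i| ^+ 2 + `|K k i1 i| ^+ 2) = 1.
  have := congr1 (fun M : 'M_2 => M i i) complete; rewrite summxE mxE eqxx mulr1n => <-.
  by apply: eq_bigr => k _; rewrite adjmx_mulE -!normCKC.
set S := \sum_k kraus_overlap (K k).
have S0 : 0 <= S by apply: sumr_ge0 => k _; apply: kraus_overlap_ge0.
have S1 : S ^+ 2 <= 1.
  have := @cauchy_schwarz_sum _ n 1 (fun k => kraus_overlap (K k))
    (fun k => `|K k i0 i0| ^+ 2 + `|K k i1 i0| ^+ 2)
    (fun k => `|K k i0 i1| ^+ 2 + `|K k i1 i1| ^+ 2) ler01.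
  rewrite !complete_entry mul1r mulr1; apply=> k.
  by rewrite mul1r kraus_overlap_ge0 !addr_ge0 ?exprn_ge0 ?kraus_overlap_sqr_le.
have [P0 Q0 _] := qubit_state_boundsC z_real r_real hz.
have [q00 q01 _ q11] := qubit_stateE z' r'.
have Spop : 2^-1 * (1 + z) * (2^-1 * (1 - z)) * S ^+ 2 <=
            2^-1 * (1 + z') * (2^-1 * (1 - z')).
  rewrite -q00 -q11 -!out_entry; apply: cauchy_schwarz_sum; first exact: mulr_ge0.
  by move=> k; have [_ ? ? ?] := bounds k; rewrite kraus_overlap_ge0.
have Sr : `|2^-1 * r'| <= `|2^-1 * r| * S.
  rewrite -q01 -out_entry mulr_sumr (le_trans (ler_norm_sum _ _ _)) //.
  by apply: ler_sum => k _; have [] := bounds k.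
exact: coherence_conditions_of_contractionC S0 S1 Spop Sr.
Qed.
End Necessity.

Section Sufficiency.
Variable C : numClosedFieldType.
Implicit Types (K : 'M[C]_2) (a b : C).

Definition diag_or_antidiag K :=
  (K i1 i0 = 0 /\ K i0 i1 = 0) \/ (K i0 i0 = 0 /\ K i1 i1 = 0).

Lemma diag_or_antidiag_incoherent K d :
  diag_or_antidiag K -> diagonal d -> diagonal (K *m d *m adjmx K).
Proof.
move=> hK hd i j ij; rewrite mulmx_adjmxE (hd i0 i1 isT) (hd i1 i0 isT).
case: (ord2P i) ij => ->; case: (ord2P j) => -> //= _;
  by case: hK => -[-> ->]; rewrite ?conjC0; ring.
Qed.

Lemma diag_or_antidiag_adjmx K : diag_or_antidiag K -> diag_or_antidiag (adjmx K).
Proof. by rewrite /diag_or_antidiag !mxE => -[[-> ->]|[-> ->]]; rewrite conjC0; [left|right]. Qed.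

Lemma SIO_of_diag_or_antidiag n (K : 'I_n -> 'M[C]_2) :
  kraus_complete K -> (forall k, diag_or_antidiag (K k)) -> SIO_kraus K.
Proof.
move=> complete hK; split; first by split => // k d; apply: diag_or_antidiag_incoherent.
move=> k d hd; rewrite -{2}(adjmxK (K k)).
by apply: diag_or_antidiag_incoherent => //; apply: diag_or_antidiag_adjmx.
Qed.

Definition diag2 a b : 'M[C]_2 :=
  \matrix_(i, j) (if i == j then (if i == i0 then a else b) else 0).
Definition antidiag2 a b : 'M[C]_2 :=
  \matrix_(i, j) (if i == j then 0 else (if j == i0 then a else b)).

(* With [w^2 + w'^2 = 1], the pairs with weights [w] and [w'] transmit the overlap
   [x y + xb yb] with opposite signs, so the coherence is scaled by
   [(w^2 - w'^2) (x y + xb yb)], while the populations do not see the signs. *)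
Definition sio_family (x y xb yb w w' : C) (k : 'I_4) : 'M[C]_2 :=
  match val k with
  | 0 => diag2 (w * x) (w * y)
  | 1 => diag2 (w' * x) (- (w' * y))
  | 2 => antidiag2 (w * xb) (w * yb)
  | _ => antidiag2 (w' * xb) (- (w' * yb))
  end.

Variables x y xb yb w w' : C.
Hypotheses (x_real : x \is Num.real) (y_real : y \is Num.real).
Hypotheses (xb_real : xb \is Num.real) (yb_real : yb \is Num.real).
Hypotheses (w_real : w \is Num.real) (w'_real : w' \is Num.real).
Hypotheses (ex : x ^+ 2 + xb ^+ 2 = 1) (ey : y ^+ 2 + yb ^+ 2 = 1) (ew : w ^+ 2 + w' ^+ 2 = 1).

Let K := sio_family x y xb yb w w'.

Lemma sio_family_SIO : SIO_kraus K.
Proof.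
apply: SIO_of_diag_or_antidiag => [|k]; last first.
  by rewrite /K /sio_family; case: k => [[|[|[|[|]]]] //] _ /=;
    [left | left | right | right]; rewrite !mxE.
apply/matrixP => i j; rewrite summxE !big_ord_recl big_ord0 addr0 !adjmx_mulE /K /sio_family /=.
case: (ord2P i) => ->; case: (ord2P j) => ->;
  rewrite !mxE /= ?conjC0 ?conjCN ?conjCM ?conj_Creal //.
- by transitivity ((w ^+ 2 + w' ^+ 2) * (x ^+ 2 + xb ^+ 2)); [ring | rewrite ew ex mulr1].
- ring.
- ring.
- by transitivity ((w ^+ 2 + w' ^+ 2) * (y ^+ 2 + yb ^+ 2)); [ring | rewrite ew ey mulr1].
Qed.

Lemma sio_family_apply z r (z' r' : C) :
  2^-1 * (1 + z) * x ^+ 2 + 2^-1 * (1 - z) * yb ^+ 2 = 2^-1 * (1 + z') ->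
  2^-1 * r * ((w ^+ 2 - w' ^+ 2) * (x * y + xb * yb)) = 2^-1 * r' ->
  apply_kraus K (qubit_state z r) = qubit_state z' r'.
Proof.
move=> e0 e1; have [q00 q01 q10 q11] := qubit_stateE z r.
have [p00 p01 p10 p11] := qubit_stateE z' r'.
apply/matrixP => i j; rewrite /apply_kraus summxE !big_ord_recl big_ord0 addr0.
rewrite !mulmx_adjmxE q00 q01 q10 q11 /K /sio_family /=.
case: (ord2P i) => ->; case: (ord2P j) => ->;
  rewrite ?p00 ?p01 ?p10 ?p11 !mxE /= ?conjC0 ?conjCN ?conjCM ?conj_Creal //.
- transitivity ((w ^+ 2 + w' ^+ 2) *
    (2^-1 * (1 + z) * x ^+ 2 + 2^-1 * (1 - z) * yb ^+ 2)); first by ring.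
  by rewrite ew mul1r e0.
- by rewrite -e1; ring.
- by rewrite -e1; ring.
- transitivity ((w ^+ 2 + w' ^+ 2) * (2^-1 * (1 - z) * (y ^+ 2 + yb ^+ 2) +
    2^-1 * (1 + z) * (x ^+ 2 + xb ^+ 2) -
    (2^-1 * (1 + z) * x ^+ 2 + 2^-1 * (1 - z) * yb ^+ 2))); first by ring.
  by rewrite ew ey ex e0; ring.
Qed.
End Sufficiency.

Lemma sio_of_coherence_conditions (C : numClosedFieldType) (z r z' r' : C) :
  z \is Num.real -> r \is Num.real -> z' \is Num.real -> r' \is Num.real ->
  z ^+ 2 + r ^+ 2 <= 1 -> z' ^+ 2 + r' ^+ 2 <= 1 ->
  (1 - z ^+ 2) * r' ^+ 2 <= (1 - z' ^+ 2) * r ^+ 2 -> `|r'| <= `|r| ->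
  exists n (K : 'I_n -> 'M[C]_2),
    SIO_kraus K /\ apply_kraus K (qubit_state z r) = qubit_state z' r'.
Proof.
move=> /real_liftP[Z ->] /real_liftP[Rr ->] /real_liftP[Z' ->] /real_liftP[Rr' ->].
move=> hz hz' hcoh hr.
have [x [y [xb [yb [w [w' [ex ey ew e0 e1]]]]]]] := sio_parameters (@sqrt_realE C)
  (hz : Z ^+ 2 + Rr ^+ 2 <= 1) (hz' : Z' ^+ 2 + Rr' ^+ 2 <= 1)
  (hcoh : (1 - Z ^+ 2) * Rr' ^+ 2 <= (1 - Z' ^+ 2) * Rr ^+ 2) (hr : `|Rr'| <= `|Rr|).
have [[[[ex' ey'] ew'] e0'] e1'] :=
  (congr1 val ex, congr1 val ey, congr1 val ew, congr1 val e0, congr1 val e1).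
exists 4, (sio_family (val x) (val y) (val xb) (val yb) (val w) (val w')).
by split; [apply: sio_family_SIO | apply: sio_family_apply]; try apply: valP.
Qed.

Theorem theorem2 (C : numClosedFieldType) (z r z' r' : C)
  (hz : z \is Num.real) (hr : r \is Num.real)
  (hz' : z' \is Num.real) (hr' : r' \is Num.real)
  (hrho : z ^+ 2 + r ^+ 2 <= 1) (hrho' : z' ^+ 2 + r' ^+ 2 <= 1) :
  ((exists (n : nat) (K : 'I_n -> 'M[C]_2),
       IO_kraus K /\ apply_kraus K (qubit_state z r) = qubit_state z' r')
    <-> ((1 - z ^+ 2) * r' ^+ 2 <= (1 - z' ^+ 2) * r ^+ 2 /\ `|r'| <= `|r|))
  /\
  ((exists (n : nat) (K : 'I_n -> 'M[C]_2),
       SIO_kraus K /\ apply_kraus K (qubit_state z r) = qubit_state z' r')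
    <-> ((1 - z ^+ 2) * r' ^+ 2 <= (1 - z' ^+ 2) * r ^+ 2 /\ `|r'| <= `|r|)).
Proof.
have necessity := coherence_conditions_of_io hz hr hz' hr' hrho.
have sufficiency := sio_of_coherence_conditions hz hr hz' hr' hrho hrho'.
split; split.
- by case=> n [K [io out]]; apply: necessity io out.
- by case=> hcoh hnorm; have [n [K [[io _] out]]] := sufficiency hcoh hnorm; exists n, K.
- by case=> n [K [[io _] out]]; apply: necessity io out.
- by case; apply: sufficiency.
Qed.
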